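(* Let $G=(V,D,B)$ be a mixed graph. The Jacobian $J_G(0,I)$ of the covariance parametrization $\phi_G$, evaluated at $\Lambda=0$ and $\Omega=I$, has full column rank $|V|+|B|+|D|$ if and only if $G$ is simple.
   Context: A mixed graph with finite vertex set $V$ is a triple $G=(V,D,B)$ with $D$ a set of ordered pairs $(i,j)$, $i\ne j$ (directed edges $i\to j$) and $B$ a set of unordered pairs $\{i,j\}$, $i\ne j$ (bidirected edges); in general a pair of nodes may be joined by several edges (e.g. both $i\to j$ and $j\to i$, or $i\to j$ and $i\leftrightarrow j$). $G$ is simple if any two distinct nodes are joined by at most one edge of any type. $\mathbb{R}^D_{\mathrm{reg}}$ is the set of real $V\times V$ matrices $\Lambda$ with $\lambda_{ij}=0$ for $(i,j)\notin D$ and $I-\Lambda$ invertible; $\mathit{PD}(B)$ is the set of positive definite symmetric matrices $\Omega$ with $\omega_{ij}=0$ for $i\ne j$, $\{i,j\}\notin B$. The covariance parametrization is $\phi_G(\Lambda,\Omega)=(I-\Lambda)^{-T}\Omega(I-\Lambda)^{-1}$ on $\mathbb{R}^D_{\mathrm{reg}}\times\mathit{PD}(B)$, and $J_G$ is its Jacobian with respect to the $|D|+|V|+|B|$ free parameters $\lambda_{kl}$ ($(k,l)\in D$), $\omega_{ii}$ ($i\in V$), $\omega_{ij}$ ($\{i,j\}\in B$). *)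

From HB Require Import structures.
From mathcomp Require Import all_boot all_order all_algebra.
From mathcomp Require Import reals topology normedtype derive.
Import numFieldNormedType.Exports.
Set Implicit Arguments. Unset Strict Implicit. Unset Printing Implicit Defensive.
Import Order.TTheory GRing.Theory Num.Theory.
Local Open Scope ring_scope.

(* Mixed graph on V = 'I_n: D a set of ordered pairs (directed edges k -> l),
   B a set of 2-element subsets of V (bidirected edges). *)

Section MixedGraph.
Variable R : realType.
Variable n : nat.
Variable D : {set 'I_n * 'I_n}.
Variable B : {set {set 'I_n}}.

Definition simple : Prop :=
  forall i j : 'I_n, i != j ->
    (((i, j) \in D) + ((j, i) \in D) + ([set i; j] \in B) <= 1)%N.

(* Index type of the free parameters: lambda_kl ((k,l) in D), omega_ii (i in V),
   omega_ij ({i,j} in B). *)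
Definition DEdge := {x : 'I_n * 'I_n | x \in D}.
Definition BEdge := {e : {set 'I_n} | e \in B}.
Definition Par := (DEdge + 'I_n + BEdge)%type.

Definition bmx (e : {set 'I_n}) : 'M[R]_n :=
  \matrix_(i, j) (if (i != j) && (e == [set i; j]) then 1 else 0).

Definition lam_of (th : Par -> R) : 'M[R]_n :=
  \sum_(p : DEdge) th (inl (inl p)) *: delta_mx (val p).1 (val p).2.
Definition om_of (th : Par -> R) : 'M[R]_n :=
  \sum_(i : 'I_n) th (inl (inr i)) *: delta_mx i i
  + \sum_(e : BEdge) th (inr e) *: bmx (val e).

Definition phi (L O : 'M[R]_n) : 'M[R]_n :=
  (invmx (1%:M - L))^T *m O *m invmx (1%:M - L).
Definition phiG (th : Par -> R) : 'M[R]_n := phi (lam_of th) (om_of th).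

Definition theta0 : Par -> R :=
  fun p => match p with inl (inr _) => 1 | _ => 0 end.
Definition shift (th : Par -> R) (c : Par) (t : R) : Par -> R :=
  fun p => th p + (if p == c then t else 0).

(* Output coordinates sigma_ij, i <= j, of the symmetric matrix phi. *)
Definition SymIdx := {p : 'I_n * 'I_n | (p.1 <= p.2)%N}.

Definition JacG : 'M[R]_(#|{: SymIdx}|, #|{: Par}|) :=
  \matrix_(r < #|{: SymIdx}|, c < #|{: Par}|)
    let ij := val (enum_val r) in
    derive1 (fun t : R => phiG (shift theta0 (enum_val c) t) ij.1 ij.2) 0.

End MixedGraph.

From Pilot Require Import Defs.
From HB Require Import structures.
From mathcomp Require Import all_boot all_order all_algebra.
From mathcomp Require Import boolp reals topology normedtype derive.
From mathcomp Require Import ring.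
Import numFieldNormedType.Exports.
Import GRing.Theory.
Local Open Scope ring_scope.
Set Implicit Arguments. Unset Strict Implicit. Unset Printing Implicit Defensive.

(* Moving a single parameter c away from (0, I) gives Lambda = t L_c and
   Omega = I + t O_c with L_c^2 = 0, so (I - t L_c)^-1 = I + t L_c and the
   covariance is a cubic in t whose linear coefficient is L_c^T + O_c + L_c.
   That matrix is the 0/1 symmetric matrix supported on the positions {a, b}
   equal to the node set ends(c) of c, namely {k, l} for lambda_kl, {i} for
   omega_ii and e for omega_e.  Hence J is the incidence matrix between the
   unordered pairs {a, b} and the parameters under c |-> ends(c), and such a
   matrix has full column rank iff ends is injective: a collision yields two
   equal columns, while otherwise every column owns a unit row.  Finally ends
   is injective exactly when no two nodes are joined by two edges. *)

Lemma eq_set2_pair (T : finType) (k l a b : T) : k != l ->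
  ([set a; b] == [set k; l]) = ((a == k) && (b == l)) || ((a == l) && (b == k)).
Proof.
move=> kl; apply/eqP/idP => [E | ]; last first.
  by case/orP => /andP[/eqP-> /eqP->] //; exact: setUC.
have : k \in [set a; b] by rewrite E !inE eqxx.
have : l \in [set a; b] by rewrite E !inE eqxx orbT.
rewrite !inE => /orP[] /eqP la /orP[] /eqP ka; subst; rewrite ?eqxx ?orbT //.
all: by rewrite eqxx in kl.
Qed.

Lemma eq_set2_set1 (T : finType) (a b i : T) :
  ([set a; b] == [set i]) = (a == i) && (b == i).
Proof.
apply/eqP/andP => [E | [/eqP-> /eqP->]]; last exact: setUid.
by split; apply/eqP/set1P; rewrite -E !inE eqxx ?orbT.
Qed.

Lemma set2_sym_idx n (a b : 'I_n) :
  exists r : SymIdx n, [set (val r).1; (val r).2] = [set a; b].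
Proof.
case: (leqP a b) => ab; first by exists (exist _ (a, b) ab).
by exists (exist _ (b, a) (ltnW ab)); rewrite setUC.
Qed.

Lemma natr_orb (R : pzSemiRingType) (x y : bool) :
  ~~ (x && y) -> (x || y)%:R = x%:R + y%:R :> R.
Proof. by case: x; case: y; rewrite ?addr0 ?add0r. Qed.

Lemma sum_scale_if (R : pzRingType) (V : lmodType R) (I : finType)
    (F : I -> V) (P : pred I) (t : R) :
  \sum_i (if P i then t else 0) *: F i = \sum_(i | P i) t *: F i.
Proof. by rewrite [RHS]big_mkcond; apply: eq_bigr => i _; case: (P i); rewrite ?scale0r. Qed.

Lemma invmx_1B_nilpotent (R : comUnitRingType) n (A : 'M[R]_n) :
  A *m A = 0 -> invmx (1%:M - A) = 1%:M + A.
Proof.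
move=> AA0.
have inv1B : (1%:M - A) *m (1%:M + A) = 1%:M.
  by rewrite mulmxBl !mulmxDr !mul1mx mulmx1 AA0 addr0 addrK.
have [unit1B _] := mulmx1_unit inv1B.
by rewrite -[RHS](mulKmx unit1B) inv1B mulmx1.
Qed.

Definition incidence_mx (F : pzSemiRingType) (I J : finType) (T : eqType)
    (f : I -> T) (g : J -> T) : 'M[F]_(#|I|, #|J|) :=
  \matrix_(r, c) (f (enum_val r) == g (enum_val c))%:R.

Lemma rank_incidence_mx (F : fieldType) (I J : finType) (T : eqType)
    (f : I -> T) (g : J -> T) :
  (forall j, exists i, f i = g j) ->
  \rank (incidence_mx F f g) = #|J| <-> injective g.
Proof.
move=> g_in_f; set A := incidence_mx F f g; split=> [rankA j1 j2 g12 | inj_g].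
  have freeAT : row_free A^T by rewrite /row_free mxrank_tr rankA.
  have colA : col (enum_rank j1) A = col (enum_rank j2) A.
    by apply/colP => r; rewrite !mxE !enum_rankK g12.
  have : (delta_mx 0 (enum_rank j1) : 'rV_#|J|) *m A^T = delta_mx 0 (enum_rank j2) *m A^T.
    by rewrite -!rowE -!tr_col colA.
  move/(row_free_inj freeAT)/matrixP/(_ 0 (enum_rank j1)); rewrite !mxE !eqxx /=.
  by case: eqP => [/enum_rank_inj | _ /eqP]; rewrite ?oner_eq0.
apply/eqP; rewrite -[_ == _]/(row_full A) -sub1mx; apply/row_subP => c; rewrite row1.
have [i fi] := g_in_f (enum_val c).
suff -> : delta_mx 0 c = row (enum_rank i) A by apply: row_sub.
apply/rowP => c'; rewrite !mxE enum_rankK fi eqxx /= (inj_eq inj_g).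
by rewrite (inj_eq enum_val_inj) eq_sym.
Qed.

Lemma derive1_cubic_at0 (R : realType) (a b c d : R) :
  derive1 (fun t : R => a + t * b + t ^+ 2 * c + t ^+ 3 * d) 0 = b.
Proof.
rewrite derive1E.
have cubic' : is_derive (0 : R) 1 (fun t : R => a + t * b + t ^+ 2 * c + t ^+ 3 * d) b.
  apply: is_derive_eq.
  by rewrite expr0n !(scale0r, scaler0, add0r, addr0, mulr0) /GRing.scale /= mulr1.
exact: derive_val.
Qed.

Lemma phi_nilpotent_expand (R : realType) n (L O : 'M[R]_n) (t : R) :
  L *m L = 0 ->
  phi (t *: L) (1%:M + t *: O) =
    1%:M + t *: (L^T + O + L) + t ^+ 2 *: (L^T *m O + O *m L + L^T *m L)
    + t ^+ 3 *: (L^T *m O *m L).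
Proof.
move=> LL0; rewrite /phi invmx_1B_nilpotent; last first.
  by rewrite -scalemxAl -scalemxAr LL0 !scaler0.
rewrite [(1%:M + _)^T]linearD /= trmx1 [(_ *: _)^T]linearZ /=.
rewrite !(mulmxDl, mulmxDr, mul1mx, mulmx1) -!(scalemxAl, scalemxAr) !scalerA.
by apply/matrixP => a b; rewrite !mxE; ring.
Qed.

Lemma derive1_phi_nilpotent_at0 (R : realType) n (L O : 'M[R]_n) (a b : 'I_n) :
  L *m L = 0 ->
  derive1 (fun t : R => phi (t *: L) (1%:M + t *: O) a b) 0 = (L^T + O + L) a b.
Proof.
move=> LL0; under eq_fun do rewrite phi_nilpotent_expand // !mxE.
by rewrite derive1_cubic_at0 !mxE.
Qed.

Section ParameterEnds.
Variables (n : nat) (D : {set 'I_n * 'I_n}) (B : {set {set 'I_n}}).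
Hypothesis HD : forall x, x \in D -> x.1 != x.2.
Hypothesis HB : forall e, e \in B -> #|e| = 2%N.

Definition par_ends (c : Par D B) : {set 'I_n} :=
  match c with
  | inl (inl p) => [set (val p).1; (val p).2]
  | inl (inr i) => [set i]
  | inr e => val e
  end.

Lemma card_par_ends (c : Par D B) :
  #|par_ends c| = if c is inl (inr _) then 1%N else 2%N.
Proof.
case: c => [[p|i]|e] /=; first by rewrite cards2 HD ?(valP p).
  exact: cards1.
exact: HB (valP e).
Qed.

Lemma par_ends_set2 (c : Par D B) : exists a b, par_ends c = [set a; b].
Proof.
case: c => [[p|i]|e] /=; first by exists (val p).1, (val p).2.
  by exists i, i; rewrite setUid.
by have /eqP/cards2P[a [b [_ ->]]] := HB (valP e); exists a, b.
Qed.

Lemma lam_par_ends_inj (p : DEdge D) (c : Par D B) : simple D B ->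
  par_ends (inl (inl p)) = par_ends c -> c = inl (inl p).
Proof.
case: p => [[k l] klD] simpleG /=; have /= kl := HD klD.
case: c => [[[[k' l'] k'l'D] | i] | [e eB]] /= E.
- move/esym/eqP: E; rewrite eq_set2_pair // => /orP[] /andP[/eqP ek /eqP el].
    by subst; rewrite (bool_irrelevance k'l'D klD).
  by move: (simpleG k l kl); subst; rewrite klD k'l'D; case: (_ \in B).
- by have := congr1 (fun S : {set 'I_n} => #|S|) E; rewrite /= cards2 kl cards1.
- by move: (simpleG k l kl); rewrite klD E eB; case: (_ \in D).
Qed.

Lemma par_ends_injective_simple : injective par_ends <-> simple D B.
Proof.
split=> [inj_ends k l kl | simpleG c1 c2].
  rewrite leqNgt; apply/negP => two_edges.
  have [c1 [c2 [c12 E]]] : exists c1 c2 : Par D B, c1 != c2 /\ par_ends c1 = par_ends c2.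
    move: two_edges; case klD: ((k, l) \in D); case lkD: ((l, k) \in D) => /=.
    - exists (inl (inl (exist _ (k, l) klD))), (inl (inl (exist _ (l, k) lkD))).
      by split; [apply/eqP => -[kl_eq _]; rewrite kl_eq eqxx in kl | exact: setUC].
    - case klB: ([set k; l] \in B) => // _.
      by exists (inl (inl (exist _ (k, l) klD))), (inr (exist _ [set k; l] klB)).
    - case klB: ([set k; l] \in B) => // _.
      exists (inl (inl (exist _ (l, k) lkD))), (inr (exist _ [set k; l] klB)).
      by split=> //; exact: setUC.
    - by case: (_ \in B).
  by rewrite (inj_ends _ _ E) eqxx in c12.
have card_ends c c' : par_ends c = par_ends c' ->
    (if c is inl (inr _) then 1%N else 2%N) = if c' is inl (inr _) then 1%N else 2%N.
  by move=> E; have := congr1 (fun S : {set 'I_n} => #|S|) E; rewrite /= !card_par_ends.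
case: c1 => [[p|i]|e] E; first exact/esym/(lam_par_ends_inj simpleG).
- case: c2 E => [[q|j]|e'] E; first exact: lam_par_ends_inj (esym E).
    by move/set1_inj: E => ->.
  by have := card_ends _ _ E.
- case: c2 E => [[q|j]|e'] E; first exact: lam_par_ends_inj (esym E).
    by have := card_ends _ _ E.
  by congr inr; apply: val_inj.
Qed.

Lemma card_Par : #|{: Par D B}| = (#|D| + n + #|B|)%N.
Proof.
rewrite !card_sum card_ord /DEdge /BEdge !card_sig.
by congr (_ + _ + _)%N; apply: eq_card.
Qed.

End ParameterEnds.

Section Jacobian.
Variables (R : realType) (n : nat) (D : {set 'I_n * 'I_n}) (B : {set {set 'I_n}}).
Hypothesis HD : forall x, x \in D -> x.1 != x.2.
Hypothesis HB : forall e, e \in B -> #|e| = 2%N.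

Definition lam_dir (c : Par D B) : 'M[R]_n :=
  if c is inl (inl p) then delta_mx (val p).1 (val p).2 else 0.

Definition om_dir (c : Par D B) : 'M[R]_n :=
  match c with
  | inl (inl _) => 0
  | inl (inr i) => delta_mx i i
  | inr e => bmx R (val e)
  end.

Lemma lam_of_shift (c : Par D B) (t : R) :
  lam_of (Defs.shift (@theta0 R n D B) c t) = t *: lam_dir c.
Proof.
rewrite /lam_of /Defs.shift /theta0; under eq_bigr do rewrite add0r.
rewrite sum_scale_if; case: c => [[p|i]|e] /=; first by rewrite (big_pred1 p).
  by rewrite big_pred0 ?scaler0.
by rewrite big_pred0 ?scaler0.
Qed.

Lemma om_of_shift (c : Par D B) (t : R) :
  om_of (Defs.shift (@theta0 R n D B) c t) = 1%:M + t *: om_dir c.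
Proof.
rewrite /om_of /Defs.shift /theta0; under eq_bigr do rewrite scalerDl scale1r.
rewrite big_split /= -mx1_sum_delta -addrA; congr (_ + _).
under [X in _ + X]eq_bigr do rewrite add0r.
rewrite !sum_scale_if; case: c => [[p|i]|e] /=.
- by rewrite !big_pred0 ?scaler0 ?addr0.
- by rewrite (big_pred1 i) // big_pred0 ?addr0.
- by rewrite (big_pred1 e) // big_pred0 ?add0r.
Qed.

Lemma phiG_shift (c : Par D B) (t : R) :
  phiG (Defs.shift (@theta0 R n D B) c t) = phi (t *: lam_dir c) (1%:M + t *: om_dir c).
Proof. by rewrite /phiG lam_of_shift om_of_shift. Qed.

Lemma lam_dir_sqr (c : Par D B) : lam_dir c *m lam_dir c = 0.
Proof.
case: c => [[p|i]|e] /=; rewrite ?mul0mx //.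
by rewrite mul_delta_mx_cond eq_sym (negbTE (HD (valP p))) mulr0n.
Qed.

Lemma dir_sum_entry (c : Par D B) (a b : 'I_n) :
  ((lam_dir c)^T + om_dir c + lam_dir c) a b = ([set a; b] == par_ends c)%:R.
Proof.
case: c => [[[[k l] klD]|i]|[e eB]] /=.
- have /= kl := HD klD.
  rewrite eq_set2_pair // natr_orb; first by rewrite addr0 !mxE addrC [(b == k) && _]andbC.
  by move: kl; apply: contraNN => /and3P[/andP[/eqP <- _] /eqP <- _].
- by rewrite !mxE !addr0 add0r eq_set2_set1.
- rewrite !mxE !addr0 add0r; case: eqP => [<-|_] /=; last by rewrite eq_sym; case: eqP.
  by case: eqP => // E; have := HB eB; rewrite -E setUid cards1.
Qed.

Lemma JacG_incidence :
  JacG R D B = incidence_mx R (fun r : SymIdx n => [set (val r).1; (val r).2]) (@par_ends n D B).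
Proof.
apply/matrixP => r c; rewrite !mxE /=.
under eq_fun do rewrite phiG_shift.
by rewrite derive1_phi_nilpotent_at0 ?lam_dir_sqr // dir_sum_entry.
Qed.

End Jacobian.

Theorem lemma2 (R : realType) (n : nat) (D : {set 'I_n * 'I_n})
    (B : {set {set 'I_n}})
    (HD : forall x, x \in D -> x.1 != x.2)
    (HB : forall e, e \in B -> #|e| = 2%N) :
  \rank (JacG R D B) = (#|D| + n + #|B|)%N <-> simple D B.
Proof.
rewrite -card_Par JacG_incidence // rank_incidence_mx; first exact: par_ends_injective_simple.
by move=> c; have [a [b ->]] := par_ends_set2 HB c; exact: set2_sym_idx.
Qed.
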